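(* For any positive integers $r,t,c,m,p$ there exists a positive integer $s=s(r,t,c,m,p)$ such that the following holds. Let $G$ be a bipartite graph with bipartition $\{A,B\}$ whose edges are each coloured with an element of $[c]$, and suppose $G$ has no subgraph isomorphic to $K_{r,t}$ whose part of size $t$ is contained in $A$. If $|A|\ge s$, then there exists $A'\subseteq A$ with $|A'|\ge m$ such that for every $T\subseteq B$ with $|T|\le p$ there exists $M_T\subseteq A'$ with $|M_T|\ge m$ such that for every $v\in T$, either there is $c_v\in[c]$ such that $v$ is adjacent to every vertex of $A'$ via edges of colour $c_v$, or $v$ has no neighbour in $M_T$.
   Context: Graphs are finite and simple; $[c]=\{1,\dots,c\}$. *)

From mathcomp Require Import all_boot.
Set Implicit Arguments. Unset Strict Implicit. Unset Printing Implicit Defensive.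

(* A bipartite graph with bipartition {A,B} is given by two finite types A, B
   (the two disjoint parts) and an edge relation E : A -> B -> bool.
   An edge colouring with colours in [c] is col : A -> B -> 'I_c
   ('I_c = {0,...,c-1}, in bijection with [c]); only its values on edges matter. *)

Definition has_Krt_tA (A B : finType) (E : A -> B -> bool) (r t : nat) : Prop :=
  exists (S : {set A}) (R : {set B}),
    #|S| = t /\ #|R| = r /\ forall a b, a \in S -> b \in R -> E a b.

From mathcomp Require Import all_boot zify.
Set Implicit Arguments. Unset Strict Implicit. Unset Printing Implicit Defensive.

(* Call a vertex v of B "good" for a set Y of vertices of A (with parameters
   p, m) if either v is joined to all of Y by edges of a single colour, or v has
   few neighbours in Y: p * deg_Y(v) + m <= |Y|.
   The heart of the proof is a Ramsey-type lemma, by induction on r: every set X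
   of size at least an explicit bound s_r containing no K_{r,t} (with the t-side
   in X) has a subset A' with |A'| >= m for which every v in B is good.
   - If some v has a colour class Y of size >= s_(r-1) inside X, then X has no
     K_{r-1,t} with t-side in Y once v is deleted; induction gives A' inside Y,
     for which v is monochromatic and the other vertices are good.
   - Otherwise every degree into X is below c * s_(r-1), so X itself works when
     |X| >= p * c * s_(r-1) + m.
   The theorem follows: given T with |T| <= p, removing from A' the neighbours of
   the non-monochromatic vertices of T deletes at most |T| * (|A'| - m) / p
   <= |A'| - m vertices, leaving a set M_T of size at least m. *)

Lemma subset_of_card (T : finType) (X : {set T}) (n : nat) :
  n <= #|X| -> exists S : {set T}, S \subset X /\ #|S| = n.
Proof.
move=> /card_geqP [s [uniq_s size_s sub_s]].
exists [set x in s]; split; first by apply/subsetP=> x; rewrite inE => /sub_s.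
by rewrite cardsE (card_uniqP uniq_s).
Qed.

Lemma card_bigcup_le (I T : finType) (P : pred I) (F : I -> {set T}) :
  #|\bigcup_(i | P i) F i| <= \sum_(i | P i) #|F i|.
Proof.
elim/big_rec2: _ => [|i y x _ IH]; first by rewrite cards0.
exact: leq_trans (leq_card_setU _ _) (leq_add _ IH).
Qed.

Section Goodness.

Variables (A B : finType) (c : nat) (E : A -> B -> bool) (col : A -> B -> 'I_c).

Definition Krt_free_in (X : {set A}) (r t : nat) : Prop :=
  ~ exists (S : {set A}) (R : {set B}), S \subset X /\ #|S| = t /\ #|R| = r /\
      forall a b, a \in S -> b \in R -> E a b.

Definition nbhd_in (Y : {set A}) (v : B) : {set A} := [set a in Y | E a v].

Definition colour_class (Y : {set A}) (v : B) (k : 'I_c) : {set A} :=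
  [set a in Y | E a v && (col a v == k)].

Definition mono_to (Y : {set A}) (v : B) : bool :=
  [exists k : 'I_c, [forall a in Y, E a v && (col a v == k)]].

Definition good (p m : nat) (Y : {set A}) (v : B) : bool :=
  mono_to Y v || (p * #|nbhd_in Y v| + m <= #|Y|).

Lemma mono_toP (Y : {set A}) (v : B) :
  reflect (exists k : 'I_c, forall a, a \in Y -> E a v /\ col a v = k) (mono_to Y v).
Proof.
apply: (iffP existsP) => [[k /forallP Hk] | [k Hk]]; exists k.
  by move=> a aY; move: (Hk a); rewrite aY => /andP [-> /eqP].
apply/forallP=> a; apply/implyP=> /Hk [Eav colav].
by rewrite Eav colav eqxx.
Qed.

Lemma nbhd_in_sub (Y : {set A}) (v : B) : nbhd_in Y v \subset Y.
Proof. by apply/subsetP=> a; rewrite inE => /andP []. Qed.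

Lemma colour_class_sub_nbhd (Y : {set A}) (v : B) (k : 'I_c) :
  colour_class Y v k \subset nbhd_in Y v.
Proof. by apply/subsetP=> a; rewrite !inE => /and3P [-> ->]. Qed.

Lemma mono_to_colour_class (X Y : {set A}) (v : B) (k : 'I_c) :
  Y \subset colour_class X v k -> mono_to Y v.
Proof.
move=> /subsetP YX; apply/mono_toP; exists k => a /YX.
by rewrite inE => /and3P [_ -> /eqP].
Qed.

Lemma nbhd_le_colour_classes (Y : {set A}) (v : B) :
  #|nbhd_in Y v| <= \sum_(k < c) #|colour_class Y v k|.
Proof.
apply: leq_trans (card_bigcup_le _ _); apply: subset_leq_card.
apply/subsetP=> a; rewrite inE => /andP [aY Ea].
by apply/bigcupP; exists (col a v); rewrite // inE aY Ea eqxx.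
Qed.

Lemma good_of_small_classes (p m s : nat) (X : {set A}) :
  (forall v k, #|colour_class X v k| < s) -> p * (c * s) + m <= #|X| ->
  forall v, good p m X v.
Proof.
move=> small HX v; apply/orP; right; apply: leq_trans HX.
rewrite leq_add2r leq_mul2l; apply/orP; right.
apply: leq_trans (nbhd_le_colour_classes X v) _.
apply: (@leq_trans (\sum_(k < c) s)); last by rewrite sum_nat_const card_ord.
by apply: leq_sum => k _; apply: ltnW.
Qed.

Lemma avoiding_subset (p m : nat) (A' : {set A}) (T : {set B}) :
  0 < p -> m <= #|A'| -> (forall v, good p m A' v) -> #|T| <= p ->
  exists MT : {set A}, MT \subset A' /\ m <= #|MT| /\
    forall v, v \in T -> mono_to A' v \/ (forall a, a \in MT -> ~~ E a v).
Proof.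
move=> p_gt0 large_A' all_good cardT.
pose bad v := (v \in T) && ~~ mono_to A' v.
pose MT := A' :\: \bigcup_(v | bad v) nbhd_in A' v.
exists MT; split; first exact: subsetDl.
split; last first.
  move=> v vT; case: (boolP (mono_to A' v)) => [mono | nmono]; [left | right] => //.
  move=> a; rewrite inE => /andP [notN aA']; apply: contra notN => Eav.
  by apply/bigcupP; exists v; rewrite /bad ?vT ?nmono // inE aA' Eav.
have bad_deg v : bad v -> p * #|nbhd_in A' v| <= #|A'| - m.
  by case/andP=> _ nmono; move: (all_good v); rewrite /good (negbTE nmono) /=; lia.
have p_sum : p * \sum_(v | bad v) #|nbhd_in A' v| <= p * (#|A'| - m).
  rewrite big_distrr /=; apply: (@leq_trans (\sum_(v in T) (#|A'| - m))).
    rewrite [X in _ <= X](bigID (fun v => ~~ mono_to A' v)) /=.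
    by apply: leq_trans (leq_addr _ _); apply: leq_sum => v /bad_deg.
  by rewrite sum_nat_const leq_mul2r cardT orbT.
rewrite leq_mul2l eqn0Ngt p_gt0 /= in p_sum.
have := cardsID (\bigcup_(v | bad v) nbhd_in A' v) A'.
have := subset_leq_card (subsetIr A' (\bigcup_(v | bad v) nbhd_in A' v)).
have := leq_trans (card_bigcup_le _ _) p_sum.
rewrite /MT; lia.
Qed.

End Goodness.

Definition delete_vertex (A B : finType) (E : A -> B -> bool) (v : B) : A -> B -> bool :=
  fun a b => E a b && (b != v).

Lemma good_ext (A B : finType) (c p m : nat) (E1 E2 : A -> B -> bool)
    (col : A -> B -> 'I_c) (Y : {set A}) (w : B) :
  (forall a, E1 a w = E2 a w) -> good E1 col p m Y w = good E2 col p m Y w.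
Proof.
move=> E12; rewrite /good /mono_to.
have -> : nbhd_in E1 Y w = nbhd_in E2 Y w by apply/setP=> a; rewrite !inE E12.
by congr (_ || _); apply: eq_existsb => k; apply: eq_forallb => a; rewrite E12.
Qed.

(* A K_{r,t} in G - v with t-side in a set of neighbours of v extends by v to a
   K_{r+1,t} in G; here t > 0 ensures that v is not already in the r-side. *)
Lemma Krt_free_link (A B : finType) (E : A -> B -> bool) (X Y : {set A}) (v : B)
    (r t : nat) :
  0 < t -> Y \subset nbhd_in E X v -> Krt_free_in E X r.+1 t ->
  Krt_free_in (delete_vertex E v) Y r t.
Proof.
move=> t_gt0 YN noK [S [R [SY [cardS [cardR SR]]]]]; apply: noK.
have SN : S \subset nbhd_in E X v by exact: subset_trans SY YN.
have [a0 a0S] : exists a0, a0 \in S by apply/set0Pn; rewrite -card_gt0 cardS.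
have vR : v \notin R.
  by apply/negP=> vR; move: (SR _ _ a0S vR); rewrite /delete_vertex eqxx andbF.
exists S, (v |: R); split; first exact: subset_trans SN (nbhd_in_sub _ _ _).
split=> //; split; first by rewrite cardsU1 vR cardR.
move=> a b aS; case/setU1P => [-> | bR].
  by move/subsetP: SN => /(_ a aS); rewrite inE => /andP [].
by case/andP: (SR a b aS bR).
Qed.

Definition good_subsets_above (c p m r t s : nat) : Prop :=
  forall (A B : finType) (E : A -> B -> bool) (col : A -> B -> 'I_c) (X : {set A}),
    s <= #|X| -> Krt_free_in E X r t ->
    exists A' : {set A}, A' \subset X /\ m <= #|A'| /\ forall v, good E col p m A' v.

(* With r = 0 the hypothesis fails as soon as |X| >= t. *)
Lemma good_subsets_base (c p m t : nat) : good_subsets_above c p m 0 t t.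
Proof.
move=> A B E col X /subset_of_card [S [SX cardS]] noK; exfalso; apply: noK.
by exists S, set0; rewrite cards0; do 3 split=> //; move=> a b _; rewrite inE.
Qed.

Lemma good_subsets_step (c p m r t s : nat) :
  0 < t -> good_subsets_above c p m r t s ->
  good_subsets_above c p m r.+1 t (p * (c * s) + m).
Proof.
move=> t_gt0 IH A B E col X HX noK.
case: (boolP [exists v, exists k : 'I_c, s <= #|colour_class E col X v k|]);
  last first.
  rewrite negb_exists => /forallP small; exists X; split=> //.
  split; first exact: leq_trans (leq_addl _ _) HX.
  apply: good_of_small_classes HX => v k.
  by move: (small v); rewrite negb_exists ltnNge => /forallP /(_ k).
case/existsP=> v /existsP [k large].
have classN := colour_class_sub_nbhd E col X v k.
have [A' [A'Y [mA' all_good]]] :=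
  IH A B (delete_vertex E v) col _ large (Krt_free_link t_gt0 classN noK).
exists A'; split; first exact: subset_trans A'Y (subset_trans classN (nbhd_in_sub _ _ _)).
split=> [|w]; first exact: mA'.
have [-> | wv] := eqVneq w v; first by rewrite /good (mono_to_colour_class A'Y).
rewrite -(@good_ext _ _ _ _ _ (delete_vertex E v)) //.
by move=> a; rewrite /delete_vertex wv andbT.
Qed.

Fixpoint good_bound (c p m t r : nat) : nat :=
  if r is r'.+1 then p * (c * good_bound c p m t r') + m else t.

Lemma good_subsets_bound (c p m t r : nat) :
  0 < t -> good_subsets_above c p m r t (good_bound c p m t r).
Proof.
move=> t_gt0; elim: r => [|r IH]; first exact: good_subsets_base.
exact: good_subsets_step.
Qed.

Theorem mainTheorem9 (r t c m p : nat) :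
  0 < r -> 0 < t -> 0 < c -> 0 < m -> 0 < p ->
  exists s : nat, 0 < s /\
    forall (A B : finType) (E : A -> B -> bool) (col : A -> B -> 'I_c),
      ~ has_Krt_tA E r t ->
      s <= #|A| ->
      exists A' : {set A}, m <= #|A'| /\
        forall T : {set B}, #|T| <= p ->
          exists MT : {set A}, MT \subset A' /\ m <= #|MT| /\
            forall v, v \in T ->
              (exists cv : 'I_c, forall a, a \in A' -> E a v /\ col a v = cv)
              \/ (forall a, a \in MT -> ~~ E a v).
Proof.
move=> _ t_gt0 _ _ p_gt0.
exists (good_bound c p m t r).+1; split=> // A B E col noK cardA.
have free : Krt_free_in E [set: A] r t.
  by case=> S [R [_ HSR]]; apply: noK; exists S, R.
have large : good_bound c p m t r <= #|[set: A]| by rewrite cardsT ltnW.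
have [A' [_ [mA' all_good]]] :=
  @good_subsets_bound c p m t r t_gt0 A B E col [set: A] large free.
exists A'; split=> // T cardT.
have [MT [MTA' [mMT avoid]]] := avoiding_subset p_gt0 mA' all_good cardT.
exists MT; do 2 split=> //.
by move=> v /avoid [/mono_toP | ]; [left | right].
Qed.
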